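(* Let $\mathfrak F=(X,\parallel,Y,S_\vee)$ be a frame satisfying (F0)–(F4). For $B\in\mathcal G(Y)$ define $\overline\zeta_S(B)=\{x\in X:\overline\eta_S(\Gamma x)\subseteq B\}$. Then $\overline\zeta_S(B)\in\mathcal G(X)$ and $\overline\zeta_S$ is the right residual of $\overline\eta_S:\mathcal G(X)\to\mathcal G(Y)$: for all $A\in\mathcal G(X)$ and $B\in\mathcal G(Y)$, $\overline\eta_S(A)\subseteq B$ iff $A\subseteq\overline\zeta_S(B)$.
   Context: Polarity $(X,\parallel,Y)$, ${\parallel}\subseteq X\times Y$, $I$ its complement. $U'=\{y:\forall x\in U\;x\parallel y\}$ for $U\subseteq X$, $V'=\{x:\forall y\in V\;x\parallel y\}$ for $V\subseteq Y$; stable sets $A=A''\subseteq X$ form $\mathcal G(X)$, co-stable sets $B=B''\subseteq Y$ form $\mathcal G(Y)$ (joins $(\bigcup A_j)''$). $x\preceq z$ iff $\{x\}'\subseteq\{z\}'$, similarly on $Y$; separated means these are partial orders; $\Gamma u$ is the up-set of $u$; closed elements are the sets $\Gamma u$. Frame $(X,\parallel,Y,S_\vee)$, $S_\vee\subseteq Y\times X$, $S_\vee x=\{y:yS_\vee x\}$, $yS_\vee=\{x:yS_\vee x\}$, $zS'_\vee x$ iff $\forall y(yS_\vee x\Rightarrow z\parallel y)$. Axioms (F0) $\forall x\exists y\,xIy$, $\forall y\exists x\,xIy$; (F1) separated; (F2) each $S_\vee x$ a closed element of $\mathcal G(Y)$; (F3) each $yS_\vee$ a down-set; (F4) for each $x$,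 $\{z:zS'_\vee x\}\in\mathcal G(X)$, for each $z$, $\{x:zS'_\vee x\}\in\mathcal G(X)$. $\overline\eta_S(A)=(\bigcup_{x\in A}S_\vee x)''$ for $A\in\mathcal G(X)$. *)

Set Implicit Arguments.

Section Polarity.
Variables (X Y : Type) (par : X -> Y -> Prop) (S : Y -> X -> Prop).

Definition sub {T : Type} (A B : T -> Prop) : Prop := forall t, A t -> B t.
Definition seteq {T : Type} (A B : T -> Prop) : Prop := forall t, A t <-> B t.

Definition primeX (U : X -> Prop) : Y -> Prop := fun y => forall x, U x -> par x y.
Definition primeY (V : Y -> Prop) : X -> Prop := fun x => forall y, V y -> par x y.

Definition stable (A : X -> Prop) : Prop := seteq (primeY (primeX A)) A.
Definition costable (B : Y -> Prop) : Prop := seteq (primeX (primeY B)) B.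

Definition precX (x z : X) : Prop := sub (primeX (fun u => u = x)) (primeX (fun u => u = z)).
Definition precY (y w : Y) : Prop := sub (primeY (fun u => u = y)) (primeY (fun u => u = w)).

Definition GammaX (x : X) : X -> Prop := fun z => precX x z.
Definition GammaY (y : Y) : Y -> Prop := fun w => precY y w.

Definition Sprime (z x : X) : Prop := forall y, S y x -> par z y.

Definition F0 : Prop :=
  (forall x, exists y, ~ par x y) /\ (forall y, exists x, ~ par x y).
Definition F1 : Prop :=
  (forall x z, precX x z -> precX z x -> x = z) /\
  (forall y w, precY y w -> precY w y -> y = w).
Definition F2 : Prop :=
  forall x, costable (fun y => S y x) /\ exists y0, seteq (fun y => S y x) (GammaY y0).
Definition F3 : Prop :=
  forall y x x', S y x -> precX x' x -> S y x'.
Definition F4 : Prop :=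
  (forall x, stable (fun z => Sprime z x)) /\ (forall z, stable (fun x => Sprime z x)).

Definition eta (A : X -> Prop) : Y -> Prop :=
  primeX (primeY (fun y => exists x, A x /\ S y x)).

Definition zeta (B : Y -> Prop) : X -> Prop := fun x => sub (eta (GammaX x)) B.

End Polarity.

From Stdlib Require Import Setoid.

(* Since each [y S_∨] is a down-set (F3), the union of the [S_∨ z] over [Γx] is just [S_∨ x]; as
   [B] is co-stable, [η̄_S(Γx) ⊆ B] therefore says [S_∨ x ⊆ B], i.e. [B' ⊆ (S_∨ x)'].  So
   [ζ̄_S(B)] is the intersection over [w ∈ B'] of the sets [{x : w S'_∨ x}], which are stable
   by (F4), and the residuation law reduces to [⋃_{x∈A} S_∨ x ⊆ B iff ∀ x ∈ A, S_∨ x ⊆ B]. *)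

Section Polarity.
Variables (X Y : Type) (par : X -> Y -> Prop).

Lemma sub_primeX_iff (U : X -> Prop) (V : Y -> Prop) :
  sub V (primeX par U) <-> sub U (primeY par V).
Proof. unfold sub, primeX, primeY; firstorder. Qed.

Lemma sub_primeXY (U : X -> Prop) : sub U (primeY par (primeX par U)).
Proof. now intros x Ux y Hy; apply Hy. Qed.

Lemma primeY_primeX_sub (U U' : X -> Prop) :
  sub U U' -> sub (primeY par (primeX par U)) (primeY par (primeX par U')).
Proof. intros HU x Hx y Hy; apply Hx; intros u Uu; apply Hy, HU, Uu. Qed.

Lemma stable_ext (A A' : X -> Prop) : seteq A A' -> stable par A -> stable par A'.
Proof.
  intros AA' HA x; split.
  - intros Hx; apply AA', HA.
    apply (primeY_primeX_sub A' A); [intros u; apply AA' | exact Hx].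
  - intros Hx; apply sub_primeXY, Hx.
Qed.

Lemma stable_bigcap (I : Type) (P : I -> Prop) (F : I -> X -> Prop) :
  (forall i, P i -> stable par (F i)) ->
  stable par (fun x => forall i, P i -> F i x).
Proof.
  intros HF x; split.
  - intros Hx i Pi; apply (HF i Pi).
    apply (primeY_primeX_sub (fun x => forall i, P i -> F i x)); [|exact Hx].
    now intros u Hu; apply Hu.
  - intros Hx; apply sub_primeXY, Hx.
Qed.

Lemma costable_sub_iff (B V : Y -> Prop) :
  costable par B -> sub V B <-> sub (primeY par B) (primeY par V).
Proof.
  intros HB; rewrite <- sub_primeX_iff; split.
  - intros HV y Vy; apply HB, HV, Vy.
  - intros HV y Vy; apply HB, HV, Vy.
Qed.

Lemma closure_sub_costable (B V : Y -> Prop) :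
  costable par B -> sub (primeX par (primeY par V)) B <-> sub V B.
Proof.
  intros HB; split.
  - intros HV y Vy; apply HV; intros x Hx; apply Hx, Vy.
  - intros HV y Hy; apply HB; intros x Bx; apply Hy; intros w Vw; apply Bx, HV, Vw.
Qed.

Variable S : Y -> X -> Prop.

Lemma eta_sub_costable (A : X -> Prop) (B : Y -> Prop) :
  costable par B ->
  sub (eta par S A) B <-> forall x, A x -> sub (fun y => S y x) B.
Proof.
  intros HB; unfold eta; rewrite closure_sub_costable by exact HB; split.
  - intros H x Ax y Sxy; apply H; now exists x.
  - intros H y [x [Ax Sxy]]; exact (H x Ax y Sxy).
Qed.

Lemma zeta_iff (B : Y -> Prop) (x : X) :
  F3 par S -> costable par B ->
  zeta par S B x <-> sub (fun y => S y x) B.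
Proof.
  intros H3 HB; unfold zeta; rewrite eta_sub_costable by exact HB; split.
  - intros H; apply H; now intros y.
  - intros H z xz y Syz; apply H, (H3 y z x Syz xz).
Qed.

Lemma zeta_as_meet (B : Y -> Prop) (x : X) :
  F3 par S -> costable par B ->
  zeta par S B x <-> forall w, primeY par B w -> Sprime par S w x.
Proof.
  intros H3 HB; rewrite zeta_iff, costable_sub_iff by assumption; reflexivity.
Qed.

End Polarity.

Theorem proposition3p15 (X Y : Type) (par : X -> Y -> Prop) (S : Y -> X -> Prop) :
  F0 par -> F1 par -> F2 par S -> F3 par S -> F4 par S ->
  forall B : Y -> Prop, costable par B ->
    stable par (zeta par S B) /\
    (forall A : X -> Prop, stable par A ->
       (sub (eta par S A) B <-> sub A (zeta par S B))).
Proof.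
  intros _ _ _ H3 [_ H4] B HB; split.
  - apply stable_ext with (A := fun x => forall w, primeY par B w -> Sprime par S w x).
    + intros x; symmetry; apply zeta_as_meet; assumption.
    + apply stable_bigcap; intros w _; apply H4.
  - intros A _; rewrite eta_sub_costable by exact HB; split.
    + intros H x Ax; apply zeta_iff; auto.
    + intros H x Ax; apply (zeta_iff _ _ _ _ B x H3 HB), H, Ax.
Qed.
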